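(* Let $x=[x_1,\dots,x_N]\in S_N$ and let $(x_p,x_q,x_r)$, $p<q<r$, be a minimally chosen $[231]$-pattern in $x$. Let $x'$ be the permutation obtained from $x$ by exchanging the entries in positions $p$ and $q$, i.e. $x'=[x_1,\dots,x_{p-1},x_q,x_{p+1},\dots,x_{q-1},x_p,x_{q+1},\dots,x_N]$. Then $\phi(\pi_{x'})=\phi(\pi_x)$, and $(x'_p,x'_q,x'_r)$ is a left-minimal $[321]$-pattern in $x'$.
   Context: Permutations are in one-line notation and composed as functions. $H_0(S_N)$ is generated by $\pi_1,\dots,\pi_{N-1}$ with $\pi_i^2=\pi_i$, $\pi_i\pi_j=\pi_j\pi_i$ for $|i-j|\ge2$, $\pi_i\pi_{i+1}\pi_i=\pi_{i+1}\pi_i\pi_{i+1}$; $\pi_w=\pi_{i_1}\cdots\pi_{i_k}$ for a reduced word $w=s_{i_1}\cdots s_{i_k}$. $\phi$ is the quotient morphism from $H_0(S_N)$ to its quotient by the relations $\pi_i\pi_{i+1}\pi_i=\pi_i\pi_{i+1}$ ($1\le i\le N-2$), sending $\pi_i\mapsto\pi_i$ (this quotient is isomorphic to $\operatorname{NDPF}_N$). A $[231]$-pattern is a triple of positions $p<q<r$ with $x_r<x_p<x_q$; its width is $(r-p,q-p)$, and it is minimally chosen if its width is lexicographically minimal among all $[231]$-patterns of $x$. A $[321]$-pattern $(x_p,x_q,x_r)$ ($p<q<r$, $x_p>x_q>x_r$) is left minimal if $x_t<x_r$ for all $t$ with $p<t<q$ and $x_s>x_q$ for all $s$ with $q<s<r$.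 *)

From mathcomp Require Import all_boot.
Set Implicit Arguments. Unset Strict Implicit. Unset Printing Implicit Defensive.

(* A permutation x of {1..N} is given in one-line notation as a list
   x = [:: x_1; ...; x_N] with perm_eq x (iota 1 N).  Positions are 1-based. *)

Definition xat (x : seq nat) (p : nat) : nat := nth 0 x p.-1.

Definition swap_pos (x : seq nat) (p q : nat) : seq nat :=
  [seq xat x (if k == p then q else if k == q then p else k) | k <- iota 1 (size x)].

(* The permutation s_{i1} ... s_{ik} (composition as functions) in one-line
   notation: x o s_i exchanges positions i and i+1 of x, so we start from the
   identity and swap positions i1, i2, ..., ik successively. *)
Definition word_perm (N : nat) (w : seq nat) : seq nat :=
  foldl (fun s i => swap_pos s i i.+1) (iota 1 N) w.

(* Coxeter length = number of inversions *)
Definition inversions (x : seq nat) : nat :=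
  #|[set pq : 'I_(size x).+1 * 'I_(size x).+1 |
      [&& 0 < pq.1, pq.1 < pq.2 & xat x pq.2 < xat x pq.1]]|.

Definition reduced_word (N : nat) (x w : seq nat) : Prop :=
  [/\ all (fun i => (1 <= i) && (i <= N.-1)) w,
      word_perm N w = x & size w = inversions x].

(* Defining relations of H_0(S_N) together with the extra NDPF relations
   pi_i pi_{i+1} pi_i = pi_i pi_{i+1}, on words over {1..N-1}. *)
Inductive ndpf_basic (N : nat) : seq nat -> seq nat -> Prop :=
| nb_idem i : 1 <= i <= N.-1 -> ndpf_basic N [:: i; i] [:: i]
| nb_comm i j : 1 <= i <= N.-1 -> 1 <= j <= N.-1 -> j.+2 <= i ->
    ndpf_basic N [:: i; j] [:: j; i]
| nb_braid i : 1 <= i -> i.+1 <= N.-1 ->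
    ndpf_basic N [:: i; i.+1; i] [:: i.+1; i; i.+1]
| nb_ndpf i : 1 <= i -> i <= N - 2 ->
    ndpf_basic N [:: i; i.+1; i] [:: i; i.+1].

(* The monoid congruence generated by these relations; two words are
   equivalent iff they have the same image under
   (free monoid) -> H_0(S_N) --phi--> H_0(S_N)/(extra relations). *)
Inductive ndpf_equiv (N : nat) : seq nat -> seq nat -> Prop :=
| ne_refl w : ndpf_equiv N w w
| ne_sym u v : ndpf_equiv N u v -> ndpf_equiv N v u
| ne_trans u v w : ndpf_equiv N u v -> ndpf_equiv N v w -> ndpf_equiv N u w
| ne_ctx u a b v : ndpf_basic N a b -> ndpf_equiv N (u ++ a ++ v) (u ++ b ++ v).

Definition phi_pi_eq (N : nat) (x y : seq nat) : Prop :=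
  forall w w', reduced_word N x w -> reduced_word N y w' -> ndpf_equiv N w w'.

Definition is231 (x : seq nat) (p q r : nat) : bool :=
  [&& 1 <= p, p < q, q < r, r <= size x & xat x r < xat x p < xat x q].

Definition min231 (x : seq nat) (p q r : nat) : Prop :=
  is231 x p q r /\
  forall p' q' r', is231 x p' q' r' ->
    (r - p < r' - p') || ((r - p == r' - p') && (q - p <= q' - p')).

Definition is321 (x : seq nat) (p q r : nat) : bool :=
  [&& 1 <= p, p < q, q < r, r <= size x & xat x r < xat x q < xat x p].

Definition left_min321 (x : seq nat) (p q r : nat) : Prop :=
  [/\ is321 x p q r,
      (forall t, p < t < q -> xat x t < xat x r) &
      (forall s, q < s < r -> xat x q < xat x s)].

From mathcomp Require Import all_boot zify.

Set Implicit Arguments.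
Unset Strict Implicit.
Unset Printing Implicit Defensive.

(* In the quotient NDPF_N the generator pi_i acts on {1..N} as the map
   i+1 |-> i fixing everything else, and a word is determined up to the
   relations by the composite order-preserving decreasing map it induces:
   every word is equivalent to a normal form built from that map alone.  For a
   reduced word of x this map sends j to min(x_j, ..., x_N), since along a
   reduced word every letter acts on an ascent.  So phi(pi_x) only depends on
   the suffix minima of x, and exchanging x_p and x_q changes none of them
   because x_r, which lies after both, is smaller than both.  Minimality of the
   width makes the new [321]-pattern left minimal: an entry violating it would
   yield a [231]-pattern of smaller width. *)

Definition swap_idx (p q k : nat) : nat :=
  if k == p then q else if k == q then p else k.

Lemma swap_idxK p q : involutive (swap_idx p q).
Proof.
move=> k; rewrite /swap_idx; have [->|kp] := eqVneq k p.
  by rewrite eqxx; case: eqVneq => [->|_]; rewrite ?eqxx.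
have [->|kq] := eqVneq k q; first by rewrite eqxx.
by rewrite (negPf kp) (negPf kq).
Qed.

Lemma swap_idx_l p q : swap_idx p q p = q.
Proof. by rewrite /swap_idx eqxx. Qed.

Lemma swap_idx_r p q : swap_idx p q q = p.
Proof. by rewrite /swap_idx eqxx; case: eqVneq. Qed.

Lemma size_swap_pos x p q : size (swap_pos x p q) = size x.
Proof. by rewrite size_map size_iota. Qed.

Lemma xat_swap_pos x p q k : 0 < k <= size x ->
  xat (swap_pos x p q) k = xat x (swap_idx p q k).
Proof.
move=> hk; rewrite {1}/xat (nth_map 0) ?size_iota; last lia.
by rewrite nth_iota; last lia; rewrite add1n prednK //; case/andP: hk.
Qed.

Lemma xat_inj x k l : uniq x -> 0 < k <= size x -> 0 < l <= size x ->
  xat x k = xat x l -> k = l.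
Proof.
move=> ux hk hl; rewrite /xat => /eqP; rewrite nth_uniq //; lia.
Qed.

Lemma all_iota (P : pred nat) a n :
  (forall l, a <= l < a + n -> P l) -> all P (iota a n).
Proof. by move=> H; apply/allP => l; rewrite mem_iota; apply: H. Qed.

Lemma iotaSr m n : iota m n.+1 = iota m n ++ [:: m + n].
Proof. by rewrite -addn1 iotaD. Qed.

Section NdpfWords.
Variable N : nat.
Local Notation "u ≡ v" := (ndpf_equiv N u v) (at level 70, no associativity).

Definition letter (i : nat) : bool := (0 < i) && (i <= N.-1).

Lemma ndpf_equiv_cat s u v t : u ≡ v -> s ++ u ++ t ≡ s ++ v ++ t.
Proof.
elim=> {u v} [w|u v _ IH|u v w _ IH1 _ IH2|u a b v H].
- exact: ne_refl.
- exact: ne_sym IH.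
- exact: ne_trans IH1 IH2.
- have assoc z : s ++ (u ++ z ++ v) ++ t = (s ++ u) ++ z ++ (v ++ t) by rewrite !catA.
  by rewrite !assoc; apply: ne_ctx.
Qed.

Lemma ndpf_equiv_catl s u v : u ≡ v -> s ++ u ≡ s ++ v.
Proof. by move=> /(ndpf_equiv_cat s [::]); rewrite !cats0. Qed.

Lemma ndpf_equiv_catr u v t : u ≡ v -> u ++ t ≡ v ++ t.
Proof. exact: (ndpf_equiv_cat [::] t). Qed.

Lemma ndpf_equiv_basic a b : ndpf_basic N a b -> a ≡ b.
Proof. by move=> /(ne_ctx [::] [::]); rewrite /= !cats0. Qed.

Definition distant (l i : nat) : bool := (l.+2 <= i) || (i.+2 <= l).

Lemma ndpf_equiv_comm l i : letter l -> letter i -> distant l i ->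
  [:: l; i] ≡ [:: i; l].
Proof.
move=> /andP [l1 l2] /andP [i1 i2] /orP [li|il].
  by apply/ne_sym/ndpf_equiv_basic/nb_comm => //; lia.
by apply/ndpf_equiv_basic/nb_comm => //; lia.
Qed.

Lemma ndpf_equiv_comm_word u i : letter i -> all letter u ->
  all (distant^~ i) u -> u ++ [:: i] ≡ i :: u.
Proof.
move=> hi; elim: u => [|l u IH] /= hu hd; first exact: ne_refl.
case/andP: hu hd => hl hu /andP [hli hd].
apply: ne_trans (ndpf_equiv_catl [:: l] (IH hu hd)) _.
exact: ndpf_equiv_catr u (ndpf_equiv_comm hl hi hli).
Qed.

Lemma ndpf_iota_absorb_r a n k : 0 < a -> a + n <= N -> a <= k < a + n ->
  iota a n ++ [:: k] ≡ iota a n.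
Proof.
elim: n a => [|n IH] a a0 aN ak /=; first lia.
have [lt_ak|le_ka] := ltnP a k; first by apply: (ndpf_equiv_catl [:: a]) (IH _ _ _ _); lia.
have {ak le_ka}-> : k = a by lia.
case: n IH aN => [|n] _ aN /=; first by apply/ndpf_equiv_basic/nb_idem; lia.
apply: ne_trans (_ : [:: a, a.+1, a & iota a.+2 n] ≡ _).
  apply: (ndpf_equiv_catl [:: a; a.+1]) (ndpf_equiv_comm_word _ _ _).
  - by rewrite /letter; lia.
  - by apply: all_iota => l hl; rewrite /letter; lia.
  - by apply: all_iota => l hl; rewrite /distant; lia.
apply: (@ndpf_equiv_catr [:: a; a.+1; a] [:: a; a.+1]).
by apply/ndpf_equiv_basic/nb_ndpf; lia.
Qed.

Lemma ndpf_equiv_braid_absorb i : 0 < i -> i.+1 <= N.-1 ->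
  [:: i.+1; i; i.+1] ≡ [:: i; i.+1].
Proof.
move=> i0 iN; apply: ne_trans (ne_sym (ndpf_equiv_basic (nb_braid i0 iN))) _.
by apply/ndpf_equiv_basic/nb_ndpf; lia.
Qed.

Lemma ndpf_iota_absorb_l a n k : 0 < a -> a + n <= N -> a <= k < a + n ->
  k :: iota a n ≡ iota a n.
Proof.
elim: n k => [|n IH] k a0 aN ak; first lia.
rewrite iotaSr.
have [lt_k|ge_k] := ltnP k (a + n).
  by apply: (ndpf_equiv_catr [:: a + n]) (IH _ _ _ _); lia.
have {ak ge_k}-> : k = a + n by lia.
case: n IH aN => [|n] _ aN; first by apply/ndpf_equiv_basic/nb_idem; rewrite addn0; lia.
rewrite iotaSr addnS -!catA /=; set c := a + n.
have comm : c.+1 :: iota a n ≡ iota a n ++ [:: c.+1].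
  apply/ne_sym/ndpf_equiv_comm_word.
  - by rewrite /letter; lia.
  - by apply: all_iota => l hl; rewrite /letter; lia.
  - by apply: all_iota => l hl; rewrite /distant; lia.
apply: ne_trans (ndpf_equiv_catr [:: c; c.+1] comm) _; rewrite -catA.
by apply/ndpf_equiv_catl/ndpf_equiv_braid_absorb; lia.
Qed.

Lemma ndpf_iota_absorb_word_l u a n : 0 < a -> a + n <= N ->
  all (fun l => a <= l < a + n) u -> u ++ iota a n ≡ iota a n.
Proof.
move=> a0 aN; elim: u => [|l u IH] /=; first by move=> _; apply: ne_refl.
case/andP=> hl /IH {}IH.
exact: ne_trans (ndpf_equiv_catl [:: l] IH) (ndpf_iota_absorb_l a0 aN hl).
Qed.

Lemma ndpf_iota_absorb_word_r u a n : 0 < a -> a + n <= N ->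
  all (fun l => a <= l < a + n) u -> iota a n ++ u ≡ iota a n.
Proof.
move=> a0 aN; elim: u => [|l u IH] /=; first by rewrite cats0 => _; apply: ne_refl.
case/andP=> hl /IH {}IH; rewrite -cat1s catA.
exact: ne_trans (ndpf_equiv_catr u (ndpf_iota_absorb_r a0 aN hl)) IH.
Qed.

Definition pi_act (i k : nat) : nat := if k == i.+1 then i else k.

Definition run (j a : nat) : seq nat := iota a (j - a).

Fixpoint nf (g : nat -> nat) (n : nat) : seq nat :=
  if n is n'.+1 then run n (g n) ++ nf g n' else [::].

Lemma nfS g n : nf g n.+1 = run n.+1 (g n.+1) ++ nf g n.
Proof. by []. Qed.

Lemma eq_nf g h n : (forall j, 0 < j <= n -> g j = h j) -> nf g n = nf h n.
Proof.
elim: n => [|n IH] //= Hgh.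
by rewrite Hgh ?IH // => [j hj|]; [apply: Hgh|]; lia.
Qed.

Lemma nf_id n : nf id n = [::].
Proof. by elim: n => //= n ->; rewrite /run subnn. Qed.

Lemma nf_letters g n : (forall j, 0 < j -> 0 < g j) ->
  all (fun l => 0 < l < n) (nf g n).
Proof.
move=> Hg; elim: n => [|n IH] //=; rewrite all_cat; apply/andP; split.
  by apply: all_iota => l hl; have := Hg n.+1 isT; lia.
by apply: sub_all IH => l; lia.
Qed.

Lemma nf_rcons g i : 0 < i < N -> (forall j, 0 < j -> 0 < g j <= j) ->
  g i <= g i.+1 -> nf g N ++ [:: i] ≡ nf (g \o pi_act i) N.
Proof.
move=> hi Hg Hmono.
suff H n : i < n <= N -> nf g n ++ [:: i] ≡ nf (g \o pi_act i) n by apply: H; lia.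
elim: n => [|n IH] hn; first lia.
have [lt_in|ge_in] := ltnP i.+1 n.+1.
  have pin : pi_act i n.+1 = n.+1 by rewrite /pi_act ifN //; lia.
  by rewrite !nfS /= pin -catA; apply/ndpf_equiv_catl/IH; lia.
have {ge_in IH} en : n = i by lia.
subst n; case: i hi Hmono hn => [|i] // hi Hmono hn.
rewrite !nfS /= /pi_act eqxx ifN; last lia.
rewrite (@eq_nf (g \o pi_act i.+1) g); last by move=> j hj; rewrite /= /pi_act ifN //; lia.
set a := g i.+1; set b := g i.+2.
have ha : 0 < a <= i.+1 := Hg i.+1 isT.
have hb : 0 < b <= i.+2 := Hg i.+2 isT.
(* The letter i+1 commutes past [nf g i] and extends [run i.+1 a] to
   [run i.+2 a]; both sides then reduce to [run i.+2 a] because [a <= b]. *)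
have comm : nf g i ++ [:: i.+1] ≡ i.+1 :: nf g i.
  apply: ndpf_equiv_comm_word; first by rewrite /letter; lia.
    by apply: sub_all (nf_letters _ _) => [l|j /Hg]; rewrite /letter; lia.
  by apply: sub_all (nf_letters _ _) => [l|j /Hg]; rewrite /distant; lia.
have runS : run i.+1 a ++ [:: i.+1] = run i.+2 a.
  by rewrite /run (_ : i.+2 - a = (i.+1 - a).+1) ?iotaSr; [congr (_ ++ [:: _])|]; lia.
rewrite -!catA.
apply: ne_trans (ndpf_equiv_catl _ (ndpf_equiv_catl _ comm)) _.
rewrite -cat1s (catA (run i.+1 a)) runS !catA.
apply: ndpf_equiv_catr; apply: ne_trans (_ : _ ≡ run i.+2 a) _.
  by apply: ndpf_iota_absorb_word_l; [| |apply: all_iota]; lia.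
by apply/ne_sym/ndpf_iota_absorb_word_r; [| |apply: all_iota]; lia.
Qed.

Definition word_map (w : seq nat) (k : nat) : nat := foldr pi_act k w.

Lemma word_map_rcons w i k : word_map (rcons w i) k = word_map w (pi_act i k).
Proof. exact: foldr_rcons. Qed.

Lemma word_map_mono w : {homo word_map w : a b / a <= b}.
Proof.
elim: w => [|i w IH] a b //= /IH; rewrite /pi_act.
by do 2 case: eqVneq => ?; lia.
Qed.

Lemma word_map_bounds w j : all letter w -> 0 < j -> 0 < word_map w j <= j.
Proof.
elim: w => [|i w IH] /=; first lia.
move=> /andP [hi /IH {}IH] /IH.
by rewrite /pi_act /letter in hi *; case: eqVneq; lia.
Qed.

Lemma ndpf_equiv_nf w : all letter w -> w ≡ nf (word_map w) N.
Proof.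
elim/last_ind: w => [|w i IH]; first by rewrite [nf _ N]nf_id => _; apply: ne_refl.
rewrite all_rcons => /andP [hi /[dup] hw /IH {}IH].
rewrite (@eq_nf _ (word_map w \o pi_act i)); last by move=> j _; rewrite word_map_rcons.
rewrite -cats1.
apply: ne_trans (ndpf_equiv_catr _ IH) (nf_rcons _ _ _); rewrite /letter in hi.
- by lia.
- by move=> j /(word_map_bounds hw).
- exact: word_map_mono.
Qed.

End NdpfWords.

Lemma leq_foldr_minn m d s :
  (m <= foldr minn d s) = (m <= d) && all (leq m) s.
Proof. by elim: s => [|y s IH] /=; rewrite ?andbT // leq_min IH andbCA. Qed.

Definition sufmin (d : nat) (s : seq nat) (j : nat) : nat :=
  foldr minn d (drop j.-1 s).

(* Position 0 is excluded: [xat s 0] is a junk value. *)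
Definition suffix_ge (m : nat) (s : seq nat) (j : nat) : Prop :=
  forall k, 0 < k -> j <= k <= size s -> m <= xat s k.

Lemma leq_sufmin m d s j : m <= sufmin d s j <-> m <= d /\ suffix_ge m s j.
Proof.
rewrite /sufmin leq_foldr_minn; split.
  case/andP=> md /allP H; split=> // k k0 hk; apply: H.
  rewrite /xat; have -> : k.-1 = j.-1 + (k.-1 - j.-1) by lia.
  rewrite -nth_drop mem_nth // size_drop.
  by change (k.-1 - j.-1 < size s - j.-1); lia.
case=> -> H; apply/(all_nthP 0) => i; rewrite size_drop nth_drop => hi.
by have := H (j.-1 + i).+1 isT; rewrite /xat /=; apply; lia.
Qed.

Lemma sufmin_ext d s s' j j' :
  (forall m, suffix_ge m s j <-> suffix_ge m s' j') ->
  sufmin d s j = sufmin d s' j'.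
Proof.
move=> H; apply/eqP; rewrite eqn_leq.
have [[md ms] [md' ms']] := (proj1 (leq_sufmin _ d s j) (leqnn _),
                             proj1 (leq_sufmin _ d s' j') (leqnn _)).
by apply/andP; split; apply/leq_sufmin; split=> //; apply/H.
Qed.

Lemma sufmin_swap_pos_out d s p q j : 0 < j -> p < q <= size s ->
  (j <= p) || (q < j) -> sufmin d (swap_pos s p q) j = sufmin d s j.
Proof.
move=> j0 hpq hj; apply: sufmin_ext => m; rewrite /suffix_ge size_swap_pos.
have Hidx k : j <= k <= size s -> 0 < swap_idx p q k /\ j <= swap_idx p q k <= size s.
  by rewrite /swap_idx; (repeat case: ifP => /eqP ?); lia.
split=> H k k0 hk; have [i0 hi] := Hidx k hk.
  by rewrite -(swap_idxK p q k) -xat_swap_pos; [apply: H|]; lia.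
by rewrite xat_swap_pos; [apply: H|]; lia.
Qed.

Lemma sufmin_swap_pos_dominated d s p q r j : 0 < j -> p < q < r -> r <= size s ->
  xat s r <= minn (xat s p) (xat s q) ->
  sufmin d (swap_pos s p q) j = sufmin d s j.
Proof.
move=> j0 pqr rs xr.
have [hj|] := boolP (p < j <= q); last by move=> hj; apply: sufmin_swap_pos_out; lia.
apply: sufmin_ext => m; rewrite /suffix_ge size_swap_pos.
have idx_r : swap_idx p q r = r by rewrite /swap_idx; (repeat case: ifP => /eqP ?); lia.
have idx_k k : j <= k <= size s -> k != q -> swap_idx p q k = k.
  by rewrite /swap_idx; (repeat case: ifP => /eqP ?); lia.
split=> H k k0 hk.
  have mr : m <= xat s r by rewrite -idx_r -xat_swap_pos; [apply: H|]; lia.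
  have [->|kq] := eqVneq k q; first lia.
  by rewrite -(idx_k k hk kq) -xat_swap_pos; [apply: H|]; lia.
have mr : m <= xat s r by apply: H; lia.
rewrite xat_swap_pos; last lia.
have [->|kq] := eqVneq k q; last by rewrite idx_k //; apply: H.
by rewrite swap_idx_r; lia.
Qed.

Lemma sufmin_swap_pos_ascent d s i j : 0 < i < size s -> 0 < j ->
  xat s i < xat s i.+1 ->
  sufmin d (swap_pos s i i.+1) j = sufmin d s (pi_act i j).
Proof.
move=> hi j0 asc; rewrite /pi_act; case: eqVneq => [->|ji]; last first.
  by apply: sufmin_swap_pos_out => //; lia.
apply: sufmin_ext => m; rewrite /suffix_ge size_swap_pos.
have idx_k k : i.+1 < k -> swap_idx i i.+1 k = k.
  by rewrite /swap_idx; (repeat case: ifP => /eqP ?); lia.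
split=> H k k0 hk.
  have mi : m <= xat s i.
    by rewrite -[X in xat s X](swap_idx_r i i.+1) -xat_swap_pos; [apply: H|]; lia.
  have [->|ki1] := eqVneq k i.+1; first lia.
  have [->|ki] := eqVneq k i; first done.
  by rewrite -(idx_k k) -?xat_swap_pos; [apply: H| |]; lia.
rewrite xat_swap_pos; last lia.
have [->|ki] := eqVneq k i.+1.
  by rewrite (swap_idx_r i i.+1); apply: H; lia.
by rewrite idx_k; [apply: H|]; lia.
Qed.

(* Swapping positions i and i+1 maps the inversions of the result bijectively
   to inversions of [s], except the pair (i, i+1) itself. *)
Lemma inversions_swap_pos s i : 0 < i < size s ->
  inversions (swap_pos s i i.+1) <= inversions s + (xat s i < xat s i.+1).
Proof.
move=> hi; rewrite /inversions size_swap_pos.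
set A' := [set _ | _]; set A := [set _ | _].
have idx_le k : k <= size s -> swap_idx i i.+1 k <= size s.
  by rewrite /swap_idx; (repeat case: ifP => /eqP ?); lia.
pose t (k : 'I_(size s).+1) : 'I_(size s).+1 := inord (swap_idx i i.+1 k).
have val_t k : t k = swap_idx i i.+1 k :> nat by rewrite inordK // ltnS idx_le // -ltnS.
pose f pq := (t pq.1, t pq.2); pose e : 'I_(size s).+1 * 'I_(size s).+1 := (inord i, inord i.+1).
have fK : involutive f.
  by move=> [p q]; congr pair; apply: val_inj => /=; rewrite !val_t swap_idxK.
have sub : A' :\ e \subset f @: A.
  apply/subsetP => -[p q]; rewrite !inE /= => /andP [ne_e /and3P [p0 pq xpq]].
  have [hp hq] := (ltn_ord p, ltn_ord q).
  have ne : ~ (p = i :> nat /\ q = i.+1 :> nat).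
    move=> [epi eqi]; move: ne_e; rewrite xpair_eqE negb_and => /orP [] /eqP [];
    by apply: val_inj; rewrite /= inordK; lia.
  rewrite !xat_swap_pos in xpq; try lia.
  rewrite -[(p, q)]fK imset_f // inE /= !val_t xpq andbT.
  by move: ne p0 pq; rewrite /swap_idx; (repeat case: ifP => /eqP ?); lia.
have e_asc : e \in A' -> xat s i < xat s i.+1.
  rewrite inE /= !inordK; try lia.
  by rewrite !xat_swap_pos ?swap_idx_l ?swap_idx_r => [/and3P []| |]; lia.
rewrite (cardsD1 e A'); have := subset_leq_card sub; have := leq_imset_card f A.
by case: (e \in A') e_asc => [/(_ isT) ->|_]; lia.
Qed.

Lemma size_word_perm N w : size (word_perm N w) = N.
Proof.
by elim/last_ind: w => [|w i IH]; rewrite /word_perm ?foldl_rcons ?size_swap_pos ?size_iota.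
Qed.

Lemma word_perm_rcons N w i :
  word_perm N (rcons w i) = swap_pos (word_perm N w) i i.+1.
Proof. exact: foldl_rcons. Qed.

Lemma inversions_iota N : inversions (iota 1 N) = 0.
Proof.
apply/eqP; rewrite cards_eq0; apply/eqP/setP => -[p q]; rewrite !inE /=.
have hq := ltn_ord q; have hN := size_iota 1 N.
by case: and3P => // -[p0 pq]; rewrite /xat !nth_iota; lia.
Qed.

Lemma inversions_word_perm N w :
  all (letter N) w -> inversions (word_perm N w) <= size w.
Proof.
elim/last_ind: w => [_|w i IH]; first by rewrite /word_perm /= inversions_iota.
rewrite all_rcons size_rcons word_perm_rcons => /andP [hi /IH {}IH].
apply: leq_trans (inversions_swap_pos _) _; rewrite ?size_word_perm /letter in hi *; lia.
Qed.

Lemma sufmin_iota N j : 0 < j <= N -> sufmin N (iota 1 N) j = j.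
Proof.
move=> hj; apply/eqP; rewrite eqn_leq; apply/andP; split.
  by rewrite /sufmin drop_iota (_ : N - j.-1 = (N - j).+1) /= ?geq_minl; lia.
apply/leq_sufmin; split; first lia.
by move=> k k0 hk; rewrite /xat nth_iota; move: hk; rewrite size_iota; lia.
Qed.

Lemma word_map_reduced N w : all (letter N) w ->
  inversions (word_perm N w) = size w ->
  forall j, 0 < j <= N -> word_map w j = sufmin N (word_perm N w) j.
Proof.
elim/last_ind: w => [_ _ j hj|w i IH]; first by rewrite sufmin_iota.
rewrite all_rcons size_rcons word_perm_rcons => /andP [hi hw] hinv j hj.
rewrite /letter in hi; have hN := size_word_perm N w.
have hi' : 0 < i < size (word_perm N w) by lia.
have := inversions_swap_pos hi'; have := inversions_word_perm hw; rewrite hinv.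
case: (xat _ i < xat _ i.+1) / idP => asc; rewrite ?addn0 ?addn1 => h1 h2; try lia.
rewrite word_map_rcons sufmin_swap_pos_ascent //; last lia.
by apply: IH; rewrite /pi_act; try case: ifP => /eqP; lia.
Qed.

Lemma phi_pi_eq_sufmin N x y :
  (forall j, 0 < j <= N -> sufmin N x j = sufmin N y j) -> phi_pi_eq N x y.
Proof.
move=> Hxy w w' [hw wx lw] [hw' wy lw'].
apply: ne_trans (ndpf_equiv_nf hw) (ne_sym _).
rewrite (@eq_nf _ (word_map w')) => [|j hj]; first exact: ndpf_equiv_nf.
by rewrite (word_map_reduced hw) ?(word_map_reduced hw') ?wx ?wy ?lw ?lw' ?Hxy.
Qed.

Lemma min231_swap_left_min321 x p q r :
  uniq x -> min231 x p q r -> left_min321 (swap_pos x p q) p q r.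
Proof.
move=> ux [/and5P [p0 pq qr rx' /andP [xrp xpq]] hmin].
have rx : r <= size x := rx'.
have xs k : 0 < k <= size x -> xat (swap_pos x p q) k = xat x (swap_idx p q k).
  exact: xat_swap_pos.
have idx_k k : k != p -> k != q -> swap_idx p q k = k.
  by rewrite /swap_idx => /negPf -> /negPf ->.
have neq k l : 0 < k <= size x -> 0 < l <= size x -> k != l -> xat x k != xat x l.
  by move=> hk hl; apply: contraNneq => /xat_inj ->.
split.
- by rewrite /is321 size_swap_pos !xs ?swap_idx_l ?swap_idx_r ?idx_k; lia.
- move=> t /andP [pt tq]; rewrite !xs ?idx_k; try lia.
  have xrt : xat x r != xat x t by rewrite eq_sym neq; lia.
  have xpt : xat x p != xat x t by rewrite neq; lia.
  rewrite ltnNge; apply/negP => le_rt; case: (ltnP (xat x t) (xat x p)) => cmp.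
    have /hmin : is231 x t q r by rewrite /is231; lia.
    lia.
  have /hmin : is231 x p t r by rewrite /is231; lia.
  lia.
- move=> t /andP [qt tr]; rewrite !xs ?swap_idx_r ?idx_k; try lia.
  have xpt : xat x p != xat x t by rewrite neq; lia.
  rewrite ltnNge; apply/negP => le_tp.
  have /hmin : is231 x p q t by rewrite /is231; lia.
  lia.
Qed.

Theorem mainTheorem12 (N : nat) (x : seq nat) (p q r : nat) :
  perm_eq x (iota 1 N) ->
  min231 x p q r ->
  phi_pi_eq N (swap_pos x p q) x /\ left_min321 (swap_pos x p q) p q r.
Proof.
move=> hperm hmin; have ux : uniq x by rewrite (perm_uniq hperm) iota_uniq.
split; last exact: min231_swap_left_min321.
have [/and5P [p0 pq qr rx /andP [xrp xpq]] _] := hmin.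
apply: phi_pi_eq_sufmin => j /andP [j0 _].
by apply: (@sufmin_swap_pos_dominated _ _ _ _ r) => //; lia.
Qed.
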